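(* Let $n=2$ and assume $\lfloor (M_1+M_2)/p\rfloor=1$ (ample reduction). Let $I^{[1]}(z_1,z_2)\in\mathbb{F}_p[z_1,z_2]^2$ be the coefficient of $x^{p-1}$ in $(x-z_1)^{M_1}(x-z_2)^{M_2}\Big(\frac{e_1}{x-z_1}+\frac{e_2}{x-z_2}\Big)$. Then $$I^{[1]}(z_1,z_2)=(-1)^{M_2}(z_2-z_1)^{M_1+M_2-p}\frac{\Gamma_{\mathbb{F}_p}(M_1+1)\Gamma_{\mathbb{F}_p}(M_2+1)}{\Gamma_{\mathbb{F}_p}(M_1+M_2-p+1)}\Big(\frac{e_1}{M_1}-\frac{e_2}{M_2}\Big) =(-1)^{M_1}(z_1-z_2)^{M_1+M_2-p}\frac{\Gamma_{\mathbb{F}_p}(M_1+1)\Gamma_{\mathbb{F}_p}(M_2+1)}{\Gamma_{\mathbb{F}_p}(M_1+M_2-p+1)}\Big(\frac{e_2}{M_2}-\frac{e_1}{M_1}\Big).$$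
   Context: Let $p,q$ be primes with $p>q$ and $p>2$. Fix positive integers $m_1,m_2<q$, and let $M_i$ be the least positive integer with $M_i\equiv -m_iq^{-1}\pmod p$ ($1\le M_i\le p-1$); in formulas over $\mathbb{F}_p$, $M_i$ denotes its residue. $e_1,e_2$ is the standard basis of $\mathbb{F}_p^2$. For an integer $1\le x\le p$, $\Gamma_{\mathbb{F}_p}(x)\in\mathbb{F}_p$ denotes the residue of $(-1)^{x-1}(x-1)!$. *)

From HB Require Import structures.
From mathcomp Require Import all_boot all_order all_algebra.
Set Implicit Arguments. Unset Strict Implicit. Unset Printing Implicit Defensive.
Import Order.TTheory GRing.Theory Num.Theory.
Local Open Scope ring_scope.

Definition GammaF (p : nat) (x : nat) : 'F_p :=
  (-1) ^+ (x.-1) * (x.-1)`!%:R.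

(* Bivariate polynomial ring F_p[z1,z2], realised as {poly {poly F_p}}. *)
Notation Fz p := {poly {poly 'F_p}}.

Definition z1 (p : nat) : Fz p := ('X : {poly 'F_p})%:P.
Definition z2 (p : nat) : Fz p := 'X.

Definition e1 (p : nat) : 'rV[Fz p]_2 := delta_mx 0 0.
Definition e2 (p : nat) : 'rV[Fz p]_2 := delta_mx 0 1.

(* I^[1](z1,z2): coefficient of x^(p-1) in
   (x-z1)^M1 (x-z2)^M2 (e1/(x-z1) + e2/(x-z2))
   = (x-z1)^(M1-1)(x-z2)^M2 e1 + (x-z1)^M1 (x-z2)^(M2-1) e2   (M1,M2 >= 1). *)
Definition I1 (p M1 M2 : nat) : 'rV[Fz p]_2 :=
  ((('X - (z1 p)%:P) ^+ M1.-1 * ('X - (z2 p)%:P) ^+ M2 : {poly Fz p})`_(p.-1))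
     *: e1 p
  + ((('X - (z1 p)%:P) ^+ M1 * ('X - (z2 p)%:P) ^+ M2.-1 : {poly Fz p})`_(p.-1))
     *: e2 p.

Definition cst (p : nat) (c : 'F_p) : Fz p := c%:P%:P.
Arguments cst p c : clear implicits.

(** The coefficient of [x^(p-1)] in [(x - u)^a (x - v)^b] is found by writing
    [x - v = (x - u) + (u - v)]: in characteristic [p], the coefficient of
    [x^(p-1)] in [(x - u)^m] with [m <= 2(p-1)] vanishes unless [m = p - 1],
    because [p] divides ['C(m, p-1)] for [p <= m <= 2p-2].  Hence both entries of
    [I^[1]] are binomial multiples of [(z1 - z2)^(M1+M2-p)], and Wilson's theorem
    in the form [a! (p-1-a)! = (-1)^(a+1)] turns these binomials into the stated
    quotient of [Gamma] values. *)

From HB Require Import structures.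
From mathcomp Require Import all_boot all_order all_algebra.
From mathcomp Require Import zify ring.
Import Order.TTheory GRing.Theory Num.Theory.
Local Open Scope ring_scope.

Lemma prime_ndvd_fact p n : prime p -> (n < p)%N -> ~~ (p %| n`!)%N.
Proof.
move=> p_pr; elim: n => [|n IHn] n_lt; first by rewrite fact0 dvdn1 eqn_leq leqNgt prime_gt1.
by rewrite factS Euclid_dvdM // negb_or IHn ?(ltnW n_lt) // andbT gtnNdvd.
Qed.

Lemma prime_dvd_bin p m k : prime p ->
  (k < p)%N -> (p <= m)%N -> (m - k < p)%N -> (p %| 'C(m, k))%N.
Proof.
move=> p_pr k_lt p_le mk_lt.
have : (p %| m`!)%N by rewrite dvdn_fact // prime_gt0.
rewrite -(bin_fact (leq_trans (ltnW k_lt) p_le)) !Euclid_dvdM //.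
by rewrite !(negbTE (prime_ndvd_fact _ _ p_pr _)) // !orbF.
Qed.

Lemma coef_XsubC_exp (R : comNzRingType) (c : R) m i :
  (('X - c%:P) ^+ m)`_i = (- c) ^+ (m - i) *+ 'C(m, i).
Proof.
rewrite addrC -polyCN exprDn coef_sum.
under eq_bigr => j _ do rewrite coefMn -polyC_exp coefCM coefXn.
have [m_lt_i | i_le_m] := ltnP m i.
  rewrite bin_small // mulr0n big1 // => j _.
  case: eqP => [ij | _]; rewrite ?mulr0 ?mul0rn //.
  by move: m_lt_i; rewrite ij ltnNge -ltnS ltn_ord.
rewrite (bigD1 (Ordinal (i_le_m : (i < m.+1)%N))) //= eqxx mulr1 big1 ?addr0 //.
move=> j /eqP j_neq_i; case: eqP => [ji | _]; last by rewrite mulr0 mul0rn.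
by case: j_neq_i; apply: val_inj.
Qed.

Section CharacteristicP.

Context {R : comNzRingType} {p : nat}.
Hypothesis pcharRp : p \in [pchar R].

Lemma coef_XsubC_exp_pchar (c : R) m : (m <= (p.-1).*2)%N ->
  (('X - c%:P) ^+ m)`_p.-1 = (m == p.-1)%:R.
Proof.
have p_pr := pcharf_prime pcharRp; have p_gt0 := prime_gt0 p_pr.
move=> m_le; rewrite coef_XsubC_exp.
case: ltngtP => [m_lt | m_gt | ->]; first by rewrite bin_small.
  have /eqP bin_eq0 : 'C(m, p.-1)%:R == 0 :> R.
    by rewrite -(dvdn_pcharf pcharRp) prime_dvd_bin //; lia.
  by rewrite -mulr_natr bin_eq0 mulr0.
by rewrite subnn binn.
Qed.

Lemma coef_XsubC_exp_mul (u v : R) a b :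
  (a <= p.-1)%N -> (p.-1 <= a + b)%N -> (a + b <= (p.-1).*2)%N ->
  (('X - u%:P) ^+ a * ('X - v%:P) ^+ b)`_p.-1
    = (u - v) ^+ (a + b - p.-1) *+ 'C(b, a + b - p.-1).
Proof.
move=> a_le ab_ge ab_le; set j0 := (a + b - p.-1)%N; set y := 'X - u%:P.
have -> : 'X - v%:P = y + (u - v)%:P by rewrite polyCB addrA subrK.
rewrite [(y + _) ^+ b]exprDn mulr_sumr coef_sum.
under eq_bigr => j _ do rewrite mulrnAr mulrA -exprD -polyC_exp coefMn coefMC.
have j0_lt : (j0 < b.+1)%N by lia.
rewrite (bigD1 (Ordinal j0_lt)) //= big1 ?addr0.
  rewrite coef_XsubC_exp_pchar; last by lia.
  have /eqP -> : (a + (b - j0) == p.-1)%N by rewrite /j0; lia.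
  by rewrite eqxx mul1r.
move=> j /eqP j_neq; rewrite coef_XsubC_exp_pchar; last by have := ltn_ord j; lia.
case: eqP => [j_eq | _]; last by rewrite mul0r mul0rn.
by case: j_neq; apply: val_inj => /=; have := ltn_ord j; lia.
Qed.

Lemma natr_pchar_neq0 n : (0 < n < p)%N -> n%:R != 0 :> R.
Proof. by case/andP=> n_gt0 n_lt; rewrite -(dvdn_pcharf pcharRp) gtnNdvd. Qed.

Lemma natr_compl_pchar n : (n <= p)%N -> (p - n)%:R = - n%:R :> R.
Proof.
by move=> n_le; apply/eqP; rewrite -subr_eq0 opprK -natrD subnK // (pcharf0 pcharRp).
Qed.

Lemma fact_pchar_neq0 n : (n < p)%N -> n`!%:R != 0 :> R.
Proof.
by move=> n_lt; rewrite -(dvdn_pcharf pcharRp) prime_ndvd_fact ?(pcharf_prime pcharRp).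
Qed.

Lemma Wilson_reflect a : (a < p)%N -> (a`! * (p.-1 - a)`!)%:R = (-1) ^+ a.+1 :> R.
Proof.
have p_gt1 := prime_gt1 (pcharf_prime pcharRp).
elim: a => [|a IHa] a_lt.
  rewrite fact0 mul1n subn0 expr1; apply/eqP; rewrite -subr_eq0 opprK natr1.
  by rewrite -(dvdn_pcharf pcharRp) -(Wilson p_gt1) (pcharf_prime pcharRp).
have compl_S : (p.-1 - a = (p.-1 - a.+1).+1)%N by lia.
have opp_aS : (p.-1 - a.+1).+1%:R = - a.+1%:R :> R.
  by rewrite -natr_compl_pchar ?(ltnW a_lt) //; congr _%:R; lia.
move: (IHa (ltnW a_lt)); rewrite compl_S !factS !natrM opp_aS => IHa'.
by rewrite exprS -IHa'; ring.
Qed.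

End CharacteristicP.

Lemma GammaF_S p n : GammaF p n.+1 = (-1) ^+ n * n`!%:R.
Proof. by []. Qed.

Section AmpleBinomials.

Variables (p M1 M2 : nat).
Hypotheses (p_pr : prime p) (M1_gt0 : (0 < M1)%N) (M1_lt : (M1 < p)%N)
  (M2_gt0 : (0 < M2)%N) (M2_lt : (M2 < p)%N) (ample : (p <= M1 + M2)%N).

Let k := (M1 + M2 - p)%N.
Let c : 'F_p := GammaF p M1.+1 * GammaF p M2.+1 / GammaF p k.+1.

Lemma bin_ample_fact_Fp :
  (-1) ^+ M1 * ((M1 * 'C(M2, k) * k`!)%:R : 'F_p) = (M1`! * M2`!)%:R.
Proof.
have M1_fact : M1`! = (M1 * M1.-1`!)%N by rewrite -{1}(prednK M1_gt0) factS prednK.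
have wilson : ((M1.-1)`! * (p.-1 - M1.-1)`!)%:R = (-1) ^+ M1 :> 'F_p.
  by rewrite (Wilson_reflect (pchar_Fp p_pr)) ?prednK //; lia.
rewrite -(bin_fact (_ : k <= M2)%N); last by rewrite /k; lia.
have -> : (M2 - k = p.-1 - M1.-1)%N by rewrite /k; lia.
by rewrite M1_fact !natrM -wilson !natrM; ring.
Qed.

Lemma sign_GammaF_ample : (-1) ^+ M2 * (-1) ^+ k * c = (M1 * 'C(M2, k))%:R.
Proof.
have k_fact_neq0 : (k`!%:R : 'F_p) != 0.
  by rewrite (fact_pchar_neq0 (pchar_Fp p_pr)) // /k; lia.
rewrite /c !GammaF_S invr_signM.
transitivity ((-1) ^+ M2 * ((-1) ^+ M2 * ((-1) ^+ k * ((-1) ^+ k *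
    ((-1) ^+ M1 * (M1`!%:R * M2`!%:R))))) / k`!%:R : 'F_p); first by ring.
by rewrite !signrMK -natrM -bin_ample_fact_Fp signrMK natrM mulfK.
Qed.

Lemma bin_ample_Fp : 'C(M2, k)%:R = (-1) ^+ M2 * (-1) ^+ k * (c / M1%:R).
Proof.
have M1_neq0 : (M1%:R : 'F_p) != 0 by rewrite (natr_pchar_neq0 (pchar_Fp p_pr)) //; lia.
by rewrite mulrA sign_GammaF_ample natrM mulrC mulKf.
Qed.

Lemma bin_pred_ample_Fp :
  'C(M2.-1, k)%:R = - ((-1) ^+ M2 * (-1) ^+ k * (c / M2%:R)).
Proof.
have M2_neq0 : (M2%:R : 'F_p) != 0 by rewrite (natr_pchar_neq0 (pchar_Fp p_pr)) //; lia.
have compl : ((M2 - k)%:R : 'F_p) = - M1%:R.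
  by rewrite -(natr_compl_pchar (pchar_Fp p_pr)) 1?ltnW //; congr _%:R; rewrite /k; lia.
rewrite mulrA sign_GammaF_ample -[LHS](mulKf M2_neq0) -natrM mul_bin_down.
by rewrite !natrM compl mulNr mulrN mulrC.
Qed.

End AmpleBinomials.

Lemma I1_ample p M1 M2 : prime p -> (0 < M1)%N -> (M1 < p)%N ->
  (0 < M2)%N -> (M2 < p)%N -> (p <= M1 + M2)%N ->
  I1 p M1 M2 = ((z1 p - z2 p) ^+ (M1 + M2 - p) *+ 'C(M2, M1 + M2 - p)) *: e1 p
             + ((z1 p - z2 p) ^+ (M1 + M2 - p) *+ 'C(M2.-1, M1 + M2 - p)) *: e2 p.
Proof.
move=> p_pr M1_gt0 M1_lt M2_gt0 M2_lt ample.
have pcharFz : p \in [pchar Fz p] by rewrite !(rmorph_pchar polyC) // pchar_Fp.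
rewrite /I1 !coef_XsubC_exp_mul //; try lia.
by have [-> ->] : (M1.-1 + M2 - p.-1 = M1 + M2 - p /\ M1 + M2.-1 - p.-1 = M1 + M2 - p)%N
  by lia.
Qed.

Lemma sign_exprBC (R : comNzRingType) (x y : R) p a b : odd p -> (p <= a + b)%N ->
  (-1) ^+ a * (x - y) ^+ (a + b - p) = - ((-1) ^+ b * (y - x) ^+ (a + b - p)).
Proof.
move=> p_odd ample; set n := (a + b - p)%N.
rewrite -[x - y]opprB (exprNn (y - x)) mulrA -mulNr -exprD; congr (_ * _).
have sign_p : (-1) ^+ p = -1 :> R by rewrite -signr_odd p_odd.
have : (-1) ^+ (a + n) * (-1) ^+ p = (-1) ^+ b :> R.
  rewrite -exprD (_ : a + n + p = a.*2 + b)%N; last by rewrite /n; lia.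
  by rewrite exprD -mul2n mulnC exprM sqrr_sign mul1r.
by rewrite sign_p mulrN1 => <-; rewrite opprK.
Qed.

Lemma cstM p : {morph cst p : a b / a * b}.
Proof. by move=> a b; rewrite /cst !rmorphM. Qed.

Lemma cstN p : {morph cst p : a / - a}.
Proof. by move=> a; rewrite /cst !rmorphN. Qed.

Lemma cst_sign p n : cst p ((-1) ^+ n) = (-1) ^+ n.
Proof. by rewrite /cst !rmorph_sign. Qed.

Lemma cst_nat p n : cst p n%:R = n%:R.
Proof. by rewrite /cst !rmorph_nat. Qed.

Theorem theorem4p4 (p q m1 m2 M1 M2 : nat) :
  prime p -> prime q -> (q < p)%N -> (2 < p)%N ->
  (0 < m1)%N -> (m1 < q)%N -> (0 < m2)%N -> (m2 < q)%N ->
  (0 < M1)%N -> (M1 <= p.-1)%N ->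
  (M1%:R : 'F_p) = - (m1%:R) * (q%:R)^-1 ->
  (0 < M2)%N -> (M2 <= p.-1)%N ->
  (M2%:R : 'F_p) = - (m2%:R) * (q%:R)^-1 ->
  ((M1 + M2) %/ p)%N = 1%N ->
  let k : nat := (M1 + M2 - p)%N in
  let c : 'F_p := GammaF p M1.+1 * GammaF p M2.+1 / GammaF p k.+1 in
  I1 p M1 M2 =
    ((-1) ^+ M2 * (z2 p - z1 p) ^+ k * cst p c)
      *: (cst p (M1%:R)^-1 *: e1 p - cst p (M2%:R)^-1 *: e2 p)
  /\
  I1 p M1 M2 =
    ((-1) ^+ M1 * (z1 p - z2 p) ^+ k * cst p c)
      *: (cst p (M2%:R)^-1 *: e2 p - cst p (M1%:R)^-1 *: e1 p).
Proof.
move=> p_pr _ _ p_gt2 _ _ _ _ M1_gt0 M1_le _ M2_gt0 M2_le _ M12_div k c.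
have p_gt0 := prime_gt0 p_pr.
have [M1_lt M2_lt] : (M1 < p /\ M2 < p)%N by lia.
have ample : (p <= M1 + M2)%N by have := leq_divM (M1 + M2) p; rewrite M12_div mul1n.
have p_odd : odd p by case: (even_prime p_pr) p_gt2 => [->|].
have swap : (z2 p - z1 p) ^+ k = (-1) ^+ k * (z1 p - z2 p) ^+ k.
  by rewrite -[z2 p - z1 p]opprB (exprNn (z1 p - z2 p)).
have coef_e1 : (z1 p - z2 p) ^+ k *+ 'C(M2, k)
    = (-1) ^+ M2 * (z2 p - z1 p) ^+ k * cst p c * cst p (M1%:R)^-1.
  by rewrite -mulr_natr -cst_nat bin_ample_Fp // swap !(cstM, cst_sign); ring.
have coef_e2 : (z1 p - z2 p) ^+ k *+ 'C(M2.-1, k)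
    = - ((-1) ^+ M2 * (z2 p - z1 p) ^+ k * cst p c * cst p (M2%:R)^-1).
  by rewrite -mulr_natr -cst_nat bin_pred_ample_Fp // swap !(cstN, cstM, cst_sign); ring.
have first_form : I1 p M1 M2 = ((-1) ^+ M2 * (z2 p - z1 p) ^+ k * cst p c)
    *: (cst p (M1%:R)^-1 *: e1 p - cst p (M2%:R)^-1 *: e2 p).
  by rewrite I1_ample // coef_e1 coef_e2 scalerBr !scalerA scaleNr.
split=> //; rewrite first_form sign_exprBC //.
by rewrite mulNr scaleNr -scalerN opprB.
Qed.
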